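(* Let $U\subset E$ be the open subset defined by $\theta_1\neq0,\dots,\theta_c\neq0$, $x_1\neq0,\dots,x_r\neq0$, and let $\phi:U\to V_{\mathrm{GHV}}$ be the isomorphism onto the GHV locus described in the context. Then the function $\phi^*W$ on $U$, where $W=x_1+\dots+x_r$, extends holomorphically across the loci in $E$ where $\theta_1,\dots,\theta_c$ vanish; that is, $\phi^*W$ extends to a holomorphic function on the open subset $\{[x]\in E: x_1\cdots x_r\neq0\}$ of $E$.
   Context: Let $Y$ be a Fano toric orbifold with fan in a lattice $N$, with rays $\rho_1,\dots,\rho_r\in N$; exact sequences $0\to\mathbb{L}\to\mathbb{Z}^r\xrightarrow{\rho}N\to0$ ($\rho(e_i)=\rho_i$) and $0\to M\to(\mathbb{Z}^r)^\vee\xrightarrow{D}\mathbb{L}^\vee\to0$, $\mathbb{L}^\vee\cong\mathrm{Pic}(Y)$, $D_i=D(e_i^\vee)$. Let $L_1,\dots,L_c$ be line bundles on $Y$, with pairwise disjoint $S_1,\dots,S_c\subset\{1,\dots,r\}$ such that $L_i=\sum_{j\in S_i}D_j$, and $S_0=\{1,\dots,r\}\setminus(S_1\cup\dots\cup S_c)$. Coordinates $x_1,\dots,x_r$ on $\mathbb{C}^r=(\mathbb{Z}^r)^\vee\otimes\mathbb{C}$. The GHV locus $V_{\mathrm{GHV}}$ is the subvariety of $(\mathbb{C}^\times)^r$ defined by $\sum_{j\in S_i}y_j=1$ for $i=1,\dots,c$ (coordinates $y_1,\dots,y_r$), and $W=y_1+\dots+y_r$ on it. A tower of bundles is a linear map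 $\zeta:N\to(\mathbb{Z}^c)^\vee$ such that, with $\zeta_k=\zeta(\rho_k)$, for $k\in S_i$: $\zeta_k(e_j)=w_{jk}$ if $j<i$ or $i=0$, $=1$ if $j=i$, $=0$ if $j>i$, with integers $w_{jk}\le0$. Fix one. $(\mathbb{C}^\times)^c$ acts on $\mathbb{C}^r$ by $(g\cdot x)_k=\big(\prod_j g_j^{\zeta_k(e_j)}\big)x_k$, and $E=\mathbb{C}^r/\!\!/(\mathbb{C}^\times)^c$ is the GIT quotient with stability condition $(1,\dots,1)$. Define $\theta_k(x)=\sum_{j\in S_k}\big(\prod_{m=1}^{k-1}\theta_m(x)^{-w_{mj}}\big)x_j$ recursively for $k=1,\dots,c$. The isomorphism $\phi:U\to V_{\mathrm{GHV}}$ sends the class of $x$ to $y$ where, for $j\in S_k$, $y_j=x_j\theta_k^{-1}\prod_{m=1}^{k-1}\theta_m^{-w_{mj}}$ if $k\neq0$ and $y_j=x_j\prod_{m=1}^{c}\theta_m^{-w_{mj}}$ if $k=0$ (these expressions are invariant under the $(\mathbb{C}^\times)^c$-action). *)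

From HB Require Import structures.
From mathcomp Require Import all_boot all_order all_algebra.
From mathcomp Require Import all_classical all_reals all_analysis.
From mathcomp Require Import complex.
Set Implicit Arguments. Unset Strict Implicit. Unset Printing Implicit Defensive.
Import Order.TTheory GRing.Theory Num.Theory.
Import numFieldNormedType.Exports.
Local Open Scope ring_scope.

(* Combinatorial data of a tower of bundles.
   r = number of rays, c = number of line bundles.
   [part k] = i means ray k lies in S_i (i = 0 means S_0, i in 1..c means S_i).
   [w m k]  = w_{(m+1) k}  (0-based index m : 'I_c for the bundle index m+1). *)

Section Tower.
Variables (R : realType) (r c : nat) (part : 'I_r -> 'I_c.+1) (w : 'I_c -> 'I_r -> int).

Local Notation C := (R[i]).

Definition zeta (k : 'I_r) (j : 'I_c) : int :=
  let i := (part k : nat) in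
  if i == 0%N then w j k
  else if (j.+1 < i)%N then w j k
  else if j.+1 == i then 1 else 0.

Definition tact (g : 'I_c -> C) (x : 'rV[C]_r) : 'rV[C]_r :=
  \row_k ((\prod_(j < c) g j ^ zeta k j) * x ord0 k).

Fixpoint thetas (x : 'rV[C]_r) (n : nat) : seq C :=
  match n with
  | 0 => [::]
  | n'.+1 =>
      let t := thetas x n' in
      rcons t (\sum_(j < r | (part j : nat) == n'.+1)
                 (\prod_(m < c | (m < n')%N) t`_m ^ (- w m j)) * x ord0 j)
  end.

Definition theta (x : 'rV[C]_r) (k : 'I_c) : C := (thetas x c)`_k.

Definition phi_coord (x : 'rV[C]_r) (j : 'I_r) : C :=
  let i := (part j : nat) in
  let t := thetas x c in
  if i == 0%N then x ord0 j * \prod_(m < c) t`_m ^ (- w m j)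
  else x ord0 j * (t`_(i.-1))^-1 * \prod_(m < c | (m < i.-1)%N) t`_m ^ (- w m j).

Definition phiW (x : 'rV[C]_r) : C := \sum_(j < r) phi_coord x j.

End Tower.

From HB Require Import structures.
From mathcomp Require Import all_boot all_order all_algebra.
From mathcomp Require Import all_classical all_reals all_analysis.
From mathcomp Require Import complex.
From mathcomp Require Import ring.
Set Implicit Arguments. Unset Strict Implicit. Unset Printing Implicit Defensive.
Import Order.TTheory GRing.Theory Num.Theory.
Import numFieldNormedType.Exports.
Local Open Scope ring_scope.

(* For [k] in [S_i], i >= 1, the coordinate [y_k] is [x_k] times a monomial in
   [theta_1, ..., theta_(i-1)] divided by [theta_i]; summing over [S_i] and using
   the recursive definition of [theta_i] gives exactly [1].  Hence
   [phi^* W = c + sum_(k in S_0) x_k prod_m theta_m^(-w_mk)], and since all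
   [w_mk <= 0] this is a polynomial in [x], so holomorphic everywhere.  Its
   torus invariance follows from [theta_m (g.x) = g_m theta_m (x)]. *)

Section DifferentiableBig.
Variables (K : numFieldType) (V : normedModType K) (x : V).

Lemma differentiable_bigsum (I : Type) (s : seq I) (P : pred I) (F : I -> V -> K) :
  (forall i, P i -> differentiable (F i) x) ->
  differentiable (fun y => \sum_(i <- s | P i) F i y) x.
Proof.
move=> dF; elim: s => [|a s IH].
  by under eq_fun do rewrite big_nil; exact: differentiable_cst.
under eq_fun do rewrite big_cons.
by case Pa: (P a); [exact: differentiableD (dF _ Pa) IH | exact: IH].
Qed.

Lemma differentiable_bigprod (I : Type) (s : seq I) (P : pred I) (F : I -> V -> K) :
  (forall i, P i -> differentiable (F i) x) ->
  differentiable (fun y => \prod_(i <- s | P i) F i y) x.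
Proof.
move=> dF; elim: s => [|a s IH].
  by under eq_fun do rewrite big_nil; exact: differentiable_cst.
under eq_fun do rewrite big_cons.
by case Pa: (P a); [exact: differentiableM (dF _ Pa) IH | exact: IH].
Qed.

Lemma differentiable_exprz (f : V -> K) (z : int) :
  0 <= z -> differentiable f x -> differentiable (fun y => f y ^ z) x.
Proof.
case: z => [n|//] _ df; elim: n => [|n IH].
  by under eq_fun do rewrite expr0z; exact: differentiable_cst.
under eq_fun do rewrite -exprnP exprS.
exact: differentiableM df IH.
Qed.

End DifferentiableBig.

Lemma prod_exprzN_rescale (F : fieldType) (I : Type) (s : seq I) (P : pred I)
    (g t : I -> F) (z : I -> int) :
  (forall k, P k -> g k != 0) ->
  \prod_(k <- s | P k) (g k * t k) ^ (- z k) * \prod_(k <- s | P k) g k ^ z k =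
  \prod_(k <- s | P k) t k ^ (- z k).
Proof.
move=> g0; rewrite -big_split /=; apply: eq_bigr => k Pk.
by rewrite expfzMl mulrAC -expfzDr ?g0 // addNr expr0z mul1r.
Qed.

Section Tower.
Variables (R : realType) (r c : nat) (part : 'I_r -> 'I_c.+1) (w : 'I_c -> 'I_r -> int).
Hypothesis w_le0 : forall (m : 'I_c) (k : 'I_r), w m k <= 0.

Local Notation C := (R[i]).

(* [theta_(m+1)] read off the stage of the recursion where it is created, so
   that its defining equation [thetanE] holds for every [m : nat]. *)
Definition thetan (x : 'rV[C]_r) (m : nat) : C := (thetas part w x m.+1)`_m.

Lemma size_thetas (x : 'rV[C]_r) n : size (thetas part w x n) = n.
Proof. by elim: n => //= n IH; rewrite size_rcons IH. Qed.

Lemma nth_thetas (x : 'rV[C]_r) n m :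
  (m < n)%N -> (thetas part w x n)`_m = thetan x m.
Proof.
elim: n => // n IH; rewrite ltnS leq_eqVlt => /orP[/eqP -> //|lt_mn].
by rewrite /= nth_rcons size_thetas lt_mn IH.
Qed.

Lemma theta_thetan (x : 'rV[C]_r) (m : 'I_c) : theta part w x m = thetan x m.
Proof. exact: nth_thetas. Qed.

Lemma thetanE (x : 'rV[C]_r) m :
  thetan x m = \sum_(j < r | (part j : nat) == m.+1)
                 (\prod_(k < c | (k < m)%N) thetan x k ^ (- w k j)) * x ord0 j.
Proof.
rewrite /thetan /= nth_rcons size_thetas ltnn eqxx.
apply: eq_bigr => j _; congr (_ * _); apply: eq_bigr => k lt_km.
by rewrite nth_thetas.
Qed.

Lemma differentiable_thetan m (x : 'rV[C]_r) :
  differentiable (fun y : 'rV[C]_r => thetan y m : C^o)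
    (x : ('rV[C]_r : normedModType C)).
Proof.
elim/ltn_ind: m => m IH; under eq_fun do rewrite thetanE.
apply: differentiable_bigsum => j _; apply: differentiableM; last first.
  exact: differentiable_coord.
apply: differentiable_bigprod => k lt_km; apply: differentiable_exprz.
  by rewrite oppr_ge0.
exact: IH.
Qed.

Definition phiW_ext (x : 'rV[C]_r) : C^o :=
  c%:R + \sum_(j < r | (part j : nat) == 0%N)
           x ord0 j * \prod_(m < c) thetan x m ^ (- w m j).

Lemma differentiable_phiW_ext (x : 'rV[C]_r) :
  differentiable phiW_ext (x : ('rV[C]_r : normedModType C)).
Proof.
apply: differentiableD; first exact: differentiable_cst.
apply: differentiable_bigsum => j _; apply: differentiableM.
  exact: differentiable_coord.
apply: differentiable_bigprod => k _; apply: differentiable_exprz.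
  by rewrite oppr_ge0.
exact: differentiable_thetan.
Qed.

Lemma prod_zeta_S0 (g : 'I_c -> C) (j : 'I_r) : (part j : nat) = 0%N ->
  \prod_(k < c) g k ^ zeta part w j k = \prod_(k < c) g k ^ w k j.
Proof. by move=> pj; apply: eq_bigr => k _; rewrite /zeta pj. Qed.

Lemma prod_zeta_S (g : 'I_c -> C) (m : 'I_c) (j : 'I_r) : (part j : nat) = m.+1 ->
  \prod_(k < c) g k ^ zeta part w j k =
  \prod_(k < c | (k < m)%N) g k ^ w k j * g m.
Proof.
move=> pj; rewrite (bigID (fun k : 'I_c => (k < m)%N)) /=; congr (_ * _).
  by apply: eq_bigr => k lt_km; rewrite /zeta pj /= ltnS lt_km.
rewrite (bigD1 m) ?ltnn //= big1 => [|k /andP[ge_km ne_km]].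
  by rewrite /zeta pj /= ltnn eqxx expr1z mulr1.
by rewrite /zeta pj /= ltnS (negbTE ge_km) eqSS ifF ?expr0z //; exact: negbTE.
Qed.

Lemma thetan_tact (g : 'I_c -> C) (x : 'rV[C]_r) : (forall m, g m != 0) ->
  forall m : 'I_c, thetan (tact part w g x) m = g m * thetan x m.
Proof.
move=> g0; suff IH n (m : 'I_c) : (m < n)%N ->
    thetan (tact part w g x) m = g m * thetan x m by move=> m; apply: (IH m.+1).
elim: n m => // n IHn m lt_mn; rewrite !thetanE mulr_sumr.
apply: eq_bigr => j /eqP pj; rewrite mxE (prod_zeta_S _ pj).
rewrite (eq_bigr (fun k : 'I_c => (g k * thetan x k) ^ (- w k j))); last first.
  by move=> k lt_km; rewrite IHn // (leq_trans lt_km).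
by rewrite -(prod_exprzN_rescale _ (fun k : 'I_c => thetan x k) _ (fun k _ => g0 k));
  ring.
Qed.

Lemma phiW_ext_tact (g : 'I_c -> C) (x : 'rV[C]_r) : (forall m, g m != 0) ->
  phiW_ext (tact part w g x) = phiW_ext x.
Proof.
move=> g0; congr (_ + _); apply: eq_bigr => j /eqP pj.
rewrite mxE (prod_zeta_S0 _ pj).
have gx (k : 'I_c) :
    thetan (tact part w g x) k ^ (- w k j) = (g k * thetan x k) ^ (- w k j).
  by rewrite thetan_tact.
rewrite [X in _ * X](eq_bigr _ (fun k _ => gx k)).
by rewrite -(prod_exprzN_rescale _ (fun k : 'I_c => thetan x k) _ (fun k _ => g0 k));
  ring.
Qed.

Lemma phi_coord_S0 (x : 'rV[C]_r) (j : 'I_r) : (part j : nat) = 0%N ->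
  phi_coord part w x j = x ord0 j * \prod_(m < c) thetan x m ^ (- w m j).
Proof.
by move=> pj; rewrite /phi_coord pj; congr (_ * _); apply: eq_bigr => m _;
  rewrite nth_thetas.
Qed.

Lemma phi_coord_S (x : 'rV[C]_r) (i : 'I_c) (j : 'I_r) : (part j : nat) = i.+1 ->
  phi_coord part w x j =
  (thetan x i)^-1 * ((\prod_(k < c | (k < i)%N) thetan x k ^ (- w k j)) * x ord0 j).
Proof.
move=> pj; rewrite /phi_coord pj /= nth_thetas //.
rewrite (eq_bigr (fun k : 'I_c => thetan x k ^ (- w k j))) => [|k _]; last first.
  by rewrite nth_thetas.
by ring.
Qed.

Lemma sum_phi_coord_S (x : 'rV[C]_r) (i : 'I_c) : thetan x i != 0 ->
  \sum_(j < r | (part j : nat) == i.+1) phi_coord part w x j = 1.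
Proof.
move=> th0; rewrite -[RHS](mulVf th0) [X in _ = _ * X]thetanE mulr_sumr.
by apply: eq_bigr => j /eqP pj; rewrite (phi_coord_S _ pj).
Qed.

Lemma phiW_ext_phiW (x : 'rV[C]_r) : (forall m : 'I_c, theta part w x m != 0) ->
  phiW_ext x = phiW part w x.
Proof.
move=> th0; rewrite /phiW (partition_big part xpredT) //= big_ord_recl addrC.
congr (_ + _); last first.
  by apply: eq_bigr => j /eqP pj; rewrite phi_coord_S0.
have -> : c%:R = \sum_(m < c) 1 :> C by rewrite sumr_const card_ord.
by apply: eq_bigr => m _; rewrite sum_phi_coord_S // -theta_thetan.
Qed.

End Tower.

Theorem proposition3p3 (R : realType) (r c : nat)
    (part : 'I_r -> 'I_c.+1) (w : 'I_c -> 'I_r -> int)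
    (hw : forall (m : 'I_c) (k : 'I_r), w m k <= 0) :
  exists F : 'rV[R[i]]_r -> (R[i])^o,
    (* F is a function on {[x] in E : x_1 ... x_r <> 0}: invariant under the torus action *)
    (forall (g : 'I_c -> R[i]) (x : 'rV[R[i]]_r),
        (forall j, g j != 0) -> (forall k, x ord0 k != 0) ->
        F (tact part w g x) = F x) /\
    (* F is holomorphic there *)
    (forall x : 'rV[R[i]]_r, (forall k, x ord0 k != 0) ->
        differentiable F (x : ('rV[R[i]]_r : normedModType R[i]))) /\
    (* F extends phi^* W from U = {theta_i <> 0, x_k <> 0} *)
    (forall x : 'rV[R[i]]_r, (forall k, x ord0 k != 0) ->
        (forall m : 'I_c, theta part w x m != 0) ->
        F x = phiW part w x).
Proof.
exists (phiW_ext part w); split; first by move=> g x g0 _; exact: phiW_ext_tact.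
split; first by move=> x _; exact: differentiable_phiW_ext.
by move=> x _ th0; exact: phiW_ext_phiW.
Qed.
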